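(* Let $X$ be a finite set with similarity function $S$, and suppose the target clustering $\mathcal{C}^{\ast}$ satisfies stability with respect to $S$. Let $C_i,C_j$ be disjoint nonempty subsets of $X$ such that some target cluster meets both $C_i$ and $C_j$. If the unrestricted merge procedure (described below) applied to $C_i,C_j$ outputs the single cluster $C_i\cup C_j$, then there is a target cluster $C^{\ast}_l$ with $C_i\subseteq C^{\ast}_l$ and $C_j\subseteq C^{\ast}_l$.
   Context: For nonempty $A,A'\subseteq X$, $S(A,A')$ is the average of $S(x,y)$ over $x\in A,y\in A'$. $\mathcal{C}^{\ast}=\{C^{\ast}_1,\dots,C^{\ast}_k\}$ satisfies stability w.r.t. $S$ if for all $i\neq j$, every nonempty proper $A\subset C^{\ast}_i$ and nonempty $A'\subseteq C^{\ast}_j$: $S(A,C^{\ast}_i\setminus A)>S(A,A')$. Average-linkage tree $T_{glob}$ of $X$: leaves are singletons; repeatedly merge the two current nodes $N_1,N_2$ with largest $S(N_1,N_2)$ (ties arbitrary) into parent $N_1\cup N_2$ until the root $X$ remains. Split$(Y)$ for $|Y|\ge2$: let $N$ be the deepest node of $T_{glob}$ containing $Y$, with children $N_1,N_2$; output $Y\cap N_1$, $Y\cap N_2$. Unrestricted merge procedure on $C_i,C_j$: let $C'_i,C'_j$ be the output of Split$(C_i\cup C_j)$; if $\{C'_i,C'_j\}=\{C_i,C_j\}$ output the single cluster $C_i\cup C_j$, otherwise output the two clusters $C'_i,C'_j$. *)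

From mathcomp Require Import all_boot all_order all_algebra.
Set Implicit Arguments. Unset Strict Implicit. Unset Printing Implicit Defensive.
Import Order.TTheory GRing.Theory Num.Theory.
Local Open Scope ring_scope.

Section Clustering.
Variables (R : realFieldType) (T : finType) (S : T -> T -> R).

Definition S_avg (A B : {set T}) : R :=
  (\sum_(x in A) \sum_(y in B) S x y) / (#|A| * #|B|)%:R.

Definition stable (P : {set {set T}}) : Prop :=
  forall Ci Cj, Ci \in P -> Cj \in P -> Ci != Cj ->
  forall A A' : {set T}, A != set0 -> A \proper Ci ->
    A' != set0 -> A' \subset Cj ->
    S_avg A A' < S_avg A (Ci :\: A).

Definition merge_nodes (P : {set {set T}}) (N1 N2 : {set T}) : {set {set T}} :=
  (N1 :|: N2) |: ((P :\ N1) :\ N2).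

(* A valid run of average linkage from the current nodes P: the sequence of
   merges (N1, N2) performed, each merging two distinct current nodes of
   maximal average similarity (ties arbitrary), ending with the root X. *)
Fixpoint avg_linkage_from (P : {set {set T}}) (ms : seq ({set T} * {set T}))
    : Prop :=
  match ms with
  | [::] => P = [set [set: T]]
  | (N1, N2) :: ms' =>
      [/\ N1 \in P, N2 \in P, N1 != N2,
          (forall M1 M2, M1 \in P -> M2 \in P -> M1 != M2 ->
             S_avg M1 M2 <= S_avg N1 N2)
        & avg_linkage_from (merge_nodes P N1 N2) ms']
  end.

(* ms is the merge sequence of an average-linkage tree T_glob of X:
   leaves are singletons; internal node N1 :|: N2 has children N1, N2
   for each (N1, N2) in ms. *)
Definition avg_linkage (ms : seq ({set T} * {set T})) : Prop :=
  avg_linkage_from [set [set x] | x : T] ms.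

(* Split(Y) = (A, B) in the tree given by ms: for |Y| >= 2, the deepest node
   containing Y is the (inclusion-)smallest internal node N1 :|: N2 containing
   Y, and the output is (Y :&: N1, Y :&: N2). *)
Definition split_out (ms : seq ({set T} * {set T})) (Y A B : {set T}) : Prop :=
  (1 < #|Y|)%N /\
  exists N1 N2 : {set T},
    [/\ (N1, N2) \in ms, Y \subset N1 :|: N2,
        (forall M1 M2, (M1, M2) \in ms -> Y \subset M1 :|: M2 ->
           N1 :|: N2 \subset M1 :|: M2),
        A = Y :&: N1 & B = Y :&: N2].

End Clustering.

(* Every node of the average-linkage tree is laminar with respect to the
   target clustering: it lies inside one target cluster or is a union of
   target clusters.  Merging preserves this.  The only way to break it would
   be to merge a node N1 strictly inside a target cluster C with a node N2
   disjoint from C; but stability gives S(N1, N2) < S(N1, C \ N1), while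
   C \ N1 is a union of current nodes, one of which is then a strictly better
   partner for N1 than N2, contradicting the choice of the merge.
   Now if the two children of the deepest node containing Ci and Cj both meet
   a target cluster C, neither can be a union of target clusters (it would
   contain C, hence meet the other child), so both lie inside C. *)

From mathcomp Require Import all_boot all_order all_algebra.
Set Implicit Arguments. Unset Strict Implicit. Unset Printing Implicit Defensive.
Import Order.TTheory GRing.Theory Num.Theory.
Local Open Scope ring_scope.

Section Partitions.
Variables (T : finType) (Q : {set {set T}}) (D : {set T}).
Hypothesis Q_part : partition Q D.

Lemma partition_block_eq M1 M2 x :
  M1 \in Q -> M2 \in Q -> x \in M1 -> x \in M2 -> M1 = M2.
Proof.
have trQ := partition_trivIset Q_part.
by move=> M1Q M2Q xM1 xM2; rewrite -(def_pblock trQ M1Q xM1) (def_pblock trQ M2Q xM2).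
Qed.

Lemma partition_block_sub_eq M1 M2 :
  M1 \in Q -> M2 \in Q -> M1 \subset M2 -> M1 = M2.
Proof.
move=> M1Q M2Q M12; have /set0Pn [x xM1] := partition_neq0 Q_part M1Q.
exact: partition_block_eq M1Q M2Q xM1 (subsetP M12 x xM1).
Qed.

Lemma partition_merge_nodes N1 N2 :
  N1 \in Q -> N2 \in Q -> N1 != N2 -> partition (merge_nodes Q N1 N2) D.
Proof.
move=> N1Q N2Q N12.
have N2Q' : N2 \in Q :\ N1 by rewrite in_setD1 eq_sym N12.
have rest := partitionD1 (partitionD1 Q_part N1Q) N2Q'.
have ND : N1 :|: N2 \subset D by rewrite subUset !(partitionS Q_part).
have N_ne : N1 :|: N2 != set0.
  have /set0Pn [x xN1] := partition_neq0 Q_part N1Q.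
  by apply/set0Pn; exists x; rewrite inE xN1.
have N_disj : [disjoint N1 :|: N2 & (D :\: N1) :\: N2].
  by rewrite setDDl disjoint_sym disjoints_subset setDE subsetIr.
have := partitionU1 rest N_ne N_disj; congr partition.
apply/setP => x; rewrite setDDl inE in_setD.
by case: (boolP (x \in N1 :|: N2)) => // /(subsetP ND).
Qed.

End Partitions.

Lemma partition_singletons (T : finType) : partition [set [set x] | x : T] [set: T].
Proof.
apply/and3P; split.
- apply/eqP/setP => x; rewrite inE; apply/bigcupP.
  by exists [set x]; rewrite ?imset_f ?set11.
- apply/trivIsetP => _ _ /imsetP [x _ ->] /imsetP [y _ ->] xy.
  by rewrite disjoints1 inE eq_sym; apply: contraNneq xy => ->.
- by apply/imsetP => -[x _ /setP /(_ x)]; rewrite !inE eqxx.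
Qed.

Section AverageSimilarity.
Variables (R : realFieldType) (T : finType) (S : T -> T -> R).

(* The sign of [sim_excess c A B] is that of [S_avg S A B - c], and unlike the
   average it is additive in [B]. *)
Definition sim_excess (c : R) (A B : {set T}) : R :=
  \sum_(y in B) \sum_(x in A) (S x y - c).

Lemma sim_excessE c A B : A != set0 -> B != set0 ->
  sim_excess c A B = (S_avg S A B - c) * (#|A| * #|B|)%:R.
Proof.
move=> A_ne B_ne.
have n_ne0 : (#|A| * #|B|)%:R != 0 :> R.
  by rewrite pnatr_eq0 -lt0n muln_gt0 !card_gt0 A_ne B_ne.
rewrite /sim_excess /S_avg mulrBl divfK // exchange_big /=.
under eq_bigr do rewrite sumrB sumr_const.
by rewrite sumrB sumr_const -mulrnA mulr_natr mulnC.
Qed.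

Lemma sim_excess_lt0 c A B : A != set0 -> B != set0 ->
  (sim_excess c A B < 0) = (S_avg S A B < c).
Proof.
move=> A_ne B_ne; rewrite sim_excessE // pmulr_llt0 ?subr_lt0 //.
by rewrite ltr0n muln_gt0 !card_gt0 A_ne B_ne.
Qed.

Lemma sim_excess_le0 c A B : A != set0 -> B != set0 ->
  (sim_excess c A B <= 0) = (S_avg S A B <= c).
Proof.
move=> A_ne B_ne; rewrite sim_excessE // pmulr_lle0 ?subr_le0 //.
by rewrite ltr0n muln_gt0 !card_gt0 A_ne B_ne.
Qed.

Lemma sim_excess_partition (Q : {set {set T}}) (D : {set T}) c A (B : {set T}) :
  partition Q D -> B \subset D ->
  sim_excess c A B = \sum_(M in Q) sim_excess c A (M :&: B).
Proof.
move=> QD BD; rewrite /sim_excess.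
rewrite (eq_bigl (fun y => (y \in D) && (y \in B))); last first.
  by move=> y; rewrite andb_idl // => /(subsetP BD).
rewrite (set_partition_big_cond _ QD).
by apply: eq_bigr => M _; apply: eq_bigl => y; rewrite inE.
Qed.

Section Partitioned.
Variables (Q : {set {set T}}) (D : {set T}) (c : R) (A B : {set T}).
Hypotheses (Q_part : partition Q D) (BD : B \subset D).
Hypotheses (A_ne : A != set0) (B_ne : B != set0).

Lemma S_avg_le_partition :
  (forall M, M \in Q -> M :&: B != set0 -> S_avg S A (M :&: B) <= c) ->
  S_avg S A B <= c.
Proof.
move=> le_c; rewrite -sim_excess_le0 // (sim_excess_partition c A Q_part BD).
apply: sumr_le0 => M MQ; have [->|MB_ne] := eqVneq (M :&: B) set0.
  by rewrite /sim_excess big_set0.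
by rewrite sim_excess_le0 // le_c.
Qed.

Lemma S_avg_lt_partition :
  (forall M, M \in Q -> M :&: B != set0 -> S_avg S A (M :&: B) < c) ->
  S_avg S A B < c.
Proof.
move=> lt_c; rewrite -sim_excess_lt0 // (sim_excess_partition c A Q_part BD).
have /set0Pn [y yB] := B_ne.
have yD : y \in cover Q by rewrite (cover_partition Q_part) (subsetP BD).
have M0Q := pblock_mem yD; set M0 := pblock Q y in M0Q *.
have M0B_ne : M0 :&: B != set0 by apply/set0Pn; exists y; rewrite inE mem_pblock yD.
rewrite (bigD1 M0) //= -[ltRHS](addr0 0) ltr_leD ?sim_excess_lt0 ?lt_c //.
apply: sumr_le0 => M /andP [MQ _]; have [->|MB_ne] := eqVneq (M :&: B) set0.
  by rewrite /sim_excess big_set0.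
by rewrite sim_excess_le0 // ltW ?lt_c.
Qed.

End Partitioned.

Lemma S_avg_sym (S_sym : forall x y, S x y = S y x) A B :
  S_avg S A B = S_avg S B A.
Proof.
rewrite /S_avg exchange_big /= mulnC; congr (_ / _).
by apply: eq_bigr => x _; apply: eq_bigr => y _; rewrite S_sym.
Qed.

End AverageSimilarity.

Section Laminar.
Variables (T : finType) (P : {set {set T}}).
Hypothesis P_part : partition P [set: T].

Definition union_of_blocks (N : {set T}) : Prop :=
  forall D, D \in P -> N :&: D != set0 -> D \subset N.

Definition laminar (N : {set T}) : Prop :=
  (exists2 D, D \in P & N \subset D) \/ union_of_blocks N.

Lemma laminar_set1 x : laminar [set x].
Proof.
have xP : x \in cover P by rewrite (cover_partition P_part).
by left; exists (pblock P x); rewrite ?pblock_mem // sub1set mem_pblock.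
Qed.

Lemma union_of_blocksU N1 N2 :
  union_of_blocks N1 -> union_of_blocks N2 -> union_of_blocks (N1 :|: N2).
Proof.
move=> uN1 uN2 D DP; rewrite setIUl; have [N1D_0|N1D_ne] := eqVneq (N1 :&: D) set0.
  by rewrite N1D_0 set0U => /(uN2 D DP) /subset_trans; apply; rewrite subsetUr.
by move=> _; apply: subset_trans (uN1 D DP N1D_ne) (subsetUl _ _).
Qed.

Lemma laminarP N : laminar N ->
  union_of_blocks N \/ exists2 C, C \in P & N \proper C.
Proof.
case=> [[C CP NC]|]; last by left.
have [CN|CnN] := boolP (C \subset N); last by right; exists C; rewrite // properE NC.
left=> D DP /set0Pn [x]; rewrite inE => /andP [xN xD].
by rewrite (partition_block_eq P_part DP CP xD (subsetP NC x xN)).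
Qed.

Lemma laminar_sub_block C N1 N2 : C \in P -> laminar N1 ->
  C :&: N1 != set0 -> C :&: N2 != set0 -> [disjoint N1 & N2] -> N1 \subset C.
Proof.
move=> CP [[D DP N1D]|uN1] CN1 CN2 N12.
  case/set0Pn: CN1 => x; rewrite inE => /andP [xC xN1].
  by rewrite (partition_block_eq P_part CP DP xC (subsetP N1D x xN1)).
have CsubN1 : C \subset N1 by apply: uN1; rewrite // setIC.
case/set0Pn: CN2 => x; rewrite inE => /andP [xC xN2].
by have := subsetP CsubN1 x xC; rewrite (disjointFl N12 xN2).
Qed.

End Laminar.

Section Stability.
Variables (R : realFieldType) (T : finType) (S : T -> T -> R).
Variable P : {set {set T}}.
Hypotheses (S_sym : forall x y, S x y = S y x).
Hypotheses (P_part : partition P [set: T]) (P_stable : stable S P).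

Section CurrentNodes.
Variable Q : {set {set T}}.
Hypotheses (Q_part : partition Q [set: T]) (Q_laminar : {in Q, forall M, laminar P M}).

Lemma best_partner_meets_block C N1 N2 :
  C \in P -> N1 \in Q -> N1 \proper C -> N2 \in Q ->
  (forall M, M \in Q -> M != N1 -> S_avg S N1 M <= S_avg S N1 N2) ->
  N2 :&: C != set0.
Proof.
move=> CP N1Q N1C N2Q N2_best; apply/negP => /eqP N2C_0.
have N1_ne := partition_neq0 Q_part N1Q; have N2_ne := partition_neq0 Q_part N2Q.
have B_ne : C :\: N1 != set0 by move: N1C; rewrite properE setD_eq0 => /andP [].
(* the rest of C is a union of current nodes, none a better partner than N2 *)
have le_N2 : S_avg S N1 (C :\: N1) <= S_avg S N1 N2.
  apply: (S_avg_le_partition Q_part (subsetT _) N1_ne B_ne) => M MQ.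
  case/set0Pn=> x; rewrite !inE => /and3P [xM xN1 xC].
  have MN1 : M != N1 by apply: contraNneq xN1 => <-.
  have dMN1 : [disjoint M & N1] := trivIsetP (partition_trivIset Q_part) _ _ MQ N1Q MN1.
  have MC : M \subset C.
    case: (Q_laminar MQ) => [[D DP MD]|uM].
      by rewrite -(partition_block_eq P_part DP CP (subsetP MD x xM) xC).
    have CM : C \subset M by apply: uM => //; apply/set0Pn; exists x; rewrite inE xM.
    have N1M := subset_trans (proper_sub N1C) CM.
    by rewrite (partition_block_sub_eq Q_part N1Q MQ N1M) eqxx in MN1.
  by rewrite (setIidPl _) ?N2_best // subsetD MC.
(* N2 lies in other target clusters, so stability makes it a worse partner *)
have lt_N2 : S_avg S N1 N2 < S_avg S N1 (C :\: N1).
  apply: (S_avg_lt_partition P_part (subsetT _) N1_ne N2_ne) => D DP DN2_ne.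
  have CD : C != D by apply: contraNneq DN2_ne => <-; rewrite setIC N2C_0.
  exact: P_stable CP DP CD _ _ N1_ne N1C DN2_ne (subsetIl _ _).
by have := lt_le_trans lt_N2 le_N2; rewrite ltxx.
Qed.

Lemma laminar_merge_proper C N1 N2 :
  C \in P -> N1 \in Q -> N1 \proper C -> N2 \in Q -> N1 != N2 ->
  (forall M, M \in Q -> M != N1 -> S_avg S N1 M <= S_avg S N1 N2) ->
  laminar P (N1 :|: N2).
Proof.
move=> CP N1Q N1C N2Q N12 N2_best.
have /set0Pn [x] := best_partner_meets_block CP N1Q N1C N2Q N2_best.
rewrite inE => /andP [xN2 xC].
case: (Q_laminar N2Q) => [[D DP N2D]|uN2].
  left; exists C; rewrite // subUset (proper_sub N1C).
  by rewrite -(partition_block_eq P_part DP CP (subsetP N2D x xN2) xC).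
have CN2 : C \subset N2 by apply: uN2 => //; apply/set0Pn; exists x; rewrite inE xN2.
have N1N2 := subset_trans (proper_sub N1C) CN2.
by rewrite (partition_block_sub_eq Q_part N1Q N2Q N1N2) eqxx in N12.
Qed.

Lemma laminar_merge N1 N2 :
  N1 \in Q -> N2 \in Q -> N1 != N2 ->
  (forall M1 M2, M1 \in Q -> M2 \in Q -> M1 != M2 ->
     S_avg S M1 M2 <= S_avg S N1 N2) ->
  laminar P (N1 :|: N2).
Proof.
move=> N1Q N2Q N12 N12_best.
have [uN1|[C CP N1C]] := laminarP P_part (Q_laminar N1Q); last first.
  apply: (laminar_merge_proper CP N1Q N1C N2Q N12) => M MQ MN1.
  by apply: N12_best => //; rewrite eq_sym.
have [uN2|[C CP N2C]] := laminarP P_part (Q_laminar N2Q).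
  by right; apply: union_of_blocksU.
rewrite setUC; apply: (laminar_merge_proper CP N2Q N2C N1Q); first by rewrite eq_sym.
by move=> M MQ MN2; rewrite [leRHS]S_avg_sym //; apply: N12_best => //; rewrite eq_sym.
Qed.

End CurrentNodes.

Lemma avg_linkage_from_laminar ms :
  forall Q, partition Q [set: T] -> {in Q, forall M, laminar P M} ->
  avg_linkage_from S Q ms ->
  forall N1 N2, (N1, N2) \in ms ->
  [/\ laminar P N1, laminar P N2 & [disjoint N1 & N2]].
Proof.
elim: ms => [|[N1 N2] ms IH] Q Q_part Q_lam //= [N1Q N2Q N12 N12_best run] M1 M2.
rewrite in_cons => /orP [/eqP [-> ->]|inms].
  by split; [exact: Q_lam | exact: Q_lam | exact: trivIsetP (partition_trivIset Q_part) _ _ N1Q N2Q N12].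
apply: IH run _ _ inms; first exact: partition_merge_nodes.
move=> M; rewrite /merge_nodes in_setU1 !in_setD1 => /orP [/eqP ->|/and3P [_ _ MQ]].
  exact: (laminar_merge Q_part Q_lam N1Q N2Q N12 N12_best).
exact: Q_lam.
Qed.

End Stability.

Theorem lemma21 (R : realFieldType) (T : finType) (S : T -> T -> R)
  (S_sym : forall x y, S x y = S y x)
  (P : {set {set T}}) (P_part : partition P [set: T])
  (P_stable : stable S P)
  (ms : seq ({set T} * {set T})) (Tglob : avg_linkage S ms)
  (Ci Cj : {set T}) (Ci_ne : Ci != set0) (Cj_ne : Cj != set0)
  (disj : [disjoint Ci & Cj])
  (meet : exists2 C, C \in P & (C :&: Ci != set0) && (C :&: Cj != set0))
  (Ci' Cj' : {set T}) (hsplit : split_out ms (Ci :|: Cj) Ci' Cj')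
  (hsingle : [set Ci'; Cj'] = [set Ci; Cj]) :
  exists2 Cl, Cl \in P & (Ci \subset Cl) && (Cj \subset Cl).
Proof.
case: hsplit => _ [N1 [N2 [N12ms YN _ defCi' defCj']]].
have leaves_laminar : {in [set [set x] | x : T], forall M, laminar P M}.
  by move=> _ /imsetP [x _ ->]; apply: laminar_set1.
have [lamN1 lamN2 N12] := avg_linkage_from_laminar S_sym P_part P_stable
  (partition_singletons T) leaves_laminar Tglob N12ms.
case: meet => C CP /andP [CCi CCj].
have C_meets (Z : {set T}) : Z \in [set Ci'; Cj'] -> C :&: Z != set0.
  by rewrite hsingle !inE => /orP [] /eqP ->.
have C_meets_sup (Z Z' : {set T}) : Z \subset Z' -> C :&: Z != set0 -> C :&: Z' != set0.
  by move=> ZZ'; apply: contraNneq => CZ'_0; rewrite -subset0 -CZ'_0 setIS.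
have CN1 : C :&: N1 != set0.
  by apply: C_meets_sup (C_meets _ (set21 _ _)); rewrite defCi' subsetIr.
have CN2 : C :&: N2 != set0.
  by apply: C_meets_sup (C_meets _ (set22 _ _)); rewrite defCj' subsetIr.
have N1C := laminar_sub_block P_part CP lamN1 CN1 CN2 N12.
have N2C : N2 \subset C.
  by apply: (laminar_sub_block P_part CP lamN2 CN2 CN1); rewrite disjoint_sym.
exists C => //; rewrite -subUset; apply: subset_trans YN _.
by rewrite subUset N1C N2C.
Qed.
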